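(* Let $\mathcal{G}$ be a class of graphs of unbounded average degree, and let $\mathcal{A}$ be the class of all (unweighted) orientations of graphs in $\mathcal{G}$. Then $\mathcal{A}$ is not size-pliable.
   Context: An orientation of a graph is viewed as a structure over the signature $\{e\}$ with one binary symbol, where $e^{\mathbb{A}}(u,v)=1$ if $u\to v$ is an arc and $0$ otherwise. For structures $\mathbb{A},\mathbb{B}$ over a signature $\sigma$ (finite domain with functions $f^{\mathbb{A}}\colon A^{\mathrm{ar}(f)}\to\mathbb{Q}_{\ge0}$), $\mathrm{opt}(\mathbb{A},\mathbb{B})=\max_{h\colon A\to B}\sum_f\sum_{\bar x}f^{\mathbb{A}}(\bar x)f^{\mathbb{B}}(h(\bar x))$ over all maps, and $d_{\mathrm{opt}}(\mathbb{A},\mathbb{B})=\sup_{\mathbb{C}}|\ln\mathrm{opt}(\mathbb{A},\mathbb{C})-\ln\mathrm{opt}(\mathbb{B},\mathbb{C})|$ over all $\sigma$-structures $\mathbb{C}$ ($\ln0=-\infty$, $|\ln0-\ln0|=0$). A class $\mathcal{A}$ is size-pliable if for every $\varepsilon>0$ there is $k$ such that every $\mathbb{A}\in\mathcal{A}$ (signature $\sigma$) has a $\sigma$-structure $\mathbb{B}$ with domain of size at most $k$ and $d_{\mathrm{opt}}(\mathbb{A},\mathbb{B})\le\varepsilon$. *)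

From HB Require Import structures.
From mathcomp Require Import all_boot all_order all_algebra.
From mathcomp Require Import boolp classical_sets reals constructive_ereal ereal exp.
Set Implicit Arguments. Unset Strict Implicit. Unset Printing Implicit Defensive.
Import Order.TTheory GRing.Theory Num.Theory.
Local Open Scope ring_scope.

(* A structure over the signature {e} (one binary symbol): a finite domain
   and a nonnegative rational-valued binary function e. *)
Record estructure := EStructure {
  sdom : finType;
  srel : sdom -> sdom -> rat;
  srel_ge0 : forall x y, 0 <= srel x y }.

Definition hom_value (A B : estructure) (h : {ffun sdom A -> sdom B}) : rat :=
  \sum_(x : sdom A) \sum_(y : sdom A) srel x y * srel (h x) (h y).

(* opt(A,B) = max over all maps A -> B (all values are >= 0, so the
   default 0 of the big max is harmless; it is only reached if no map exists). *)
Definition opt (A B : estructure) : rat :=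
  \big[Num.max/0]_(h : {ffun sdom A -> sdom B}) hom_value h.

(* |ln a - ln b| with ln 0 = -oo, |ln 0 - ln 0| = 0, for a, b >= 0 *)
Definition ln_dist (R : realType) (a b : rat) : \bar R :=
  if (a == 0) && (b == 0) then 0%E
  else if (a == 0) || (b == 0) then +oo%E
  else (`| ln (ratr a : R) - ln (ratr b) |)%:E.

Definition d_opt (R : realType) (A B : estructure) : \bar R :=
  ereal_sup [set r | exists C : estructure, r = ln_dist R (opt A C) (opt B C)].

Definition size_pliable (R : realType) (cls : estructure -> Prop) : Prop :=
  forall eps : R, 0 < eps -> exists k : nat, forall A, cls A ->
    exists B : estructure, (#|sdom B| <= k)%N /\ (d_opt R A B <= eps%:E)%E.

Record graph := Graph {
  gV : finType;
  gE : rel gV;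
  gE_sym : symmetric gE;
  gE_irrefl : irreflexive gE }.

Definition avg_degree (G : graph) : rat :=
  (\sum_(v : gV G) #|[set u | @gE G v u]|)%:R / #|gV G|%:R.

Definition unbounded_avg_degree (cls : graph -> Prop) : Prop :=
  forall d : rat, exists G, cls G /\ d < avg_degree G.

Definition is_orientation (G : graph) (o : rel (gV G)) : Prop :=
  (forall u v, o u v -> @gE G u v) /\
  (forall u v, @gE G u v -> o u v (+) o v u).

Lemma orient_rel_ge0 (G : graph) (o : rel (gV G)) (x y : gV G) :
  0 <= (if o x y then 1 else 0 : rat).
Proof. by case: (o x y). Qed.

Definition orient_struct (G : graph) (o : rel (gV G)) : estructure :=
  @EStructure (gV G) (fun x y => if o x y then 1 else 0) (orient_rel_ge0 o).

Definition orientations_of (cls : graph -> Prop) : estructure -> Prop :=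
  fun A => exists G : graph, cls G /\ exists o : rel (gV G),
    is_orientation o /\ A = orient_struct o.

From HB Require Import structures.
From mathcomp Require Import all_boot all_order all_algebra.
From mathcomp Require Import boolp classical_sets reals constructive_ereal ereal exp.
From mathcomp Require Import sequences zify lra.
Set Implicit Arguments. Unset Strict Implicit. Unset Printing Implicit Defensive.
Import Order.TTheory GRing.Theory Num.Theory.

(* Orient every edge of a graph G with m edges independently at random.  For
   a colouring g of the vertices with k colours and an asymmetric relation D
   on the colours, let X be the number of arcs u -> v with D (g u) (g v); as D
   is asymmetric, each edge counts in X with probability at most 1/2, so
   E[3^X] <= 2^m.  Averaging over the k^n 2^(k^2) pairs (g, D) yields an
   orientation o with X < 9m/10 for all of them as soon as the average degree
   exceeds 20k + 20.
   Now let A be the structure of o and suppose d_opt(A, B) <= 1/100 with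
   |B| <= k.  Take an optimal map h : B -> A and let C be the pullback of A
   along h, a structure on the domain of B whose relation is asymmetric.  Then
   opt(A, C) >= 0.99 opt(B, C) >= 0.99 opt(B, A) >= 0.99^2 opt(A, A) >= 0.98 m,
   whereas every map A -> C preserves fewer than 9m/10 arcs. *)

Definition asymmetric (T : Type) (r : rel T) : Prop := forall x y, r x y -> ~~ r y x.

Definition num_arcs (V : finType) (o : rel V) : nat := \sum_u \sum_v (o u v : nat).

Definition preserved_arcs (V W : finType) (o : rel V) (g : V -> W) (D : rel W) : nat :=
  \sum_u \sum_v (o u v && D (g u) (g v) : nat).

Definition far_from_small_oriented (V : finType) (k : nat) (o : rel V) : Prop :=
  forall (W : finType) (g : V -> W) (D : rel W), #|W| <= k -> asymmetric D ->
    10 * preserved_arcs o g D < 9 * num_arcs o.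

Lemma exists_le_of_sum_lt (T : finType) (F : T -> nat) (M : nat) :
  \sum_t F t < #|T| * M.+1 -> exists t, F t <= M.
Proof.
move=> lt_sum; apply/existsP; apply: contraLR lt_sum => /existsPn gtM.
rewrite -leqNgt -sum_nat_const; apply: leq_sum => t _.
by rewrite ltnNge gtM.
Qed.

Lemma exp_bound_lt (k n x e : nat) : 5 * (k * n + k * k) < e ->
  3 ^ x <= k ^ n * 2 ^ (k * k) * 2 ^ e -> 10 * x < 9 * e.
Proof.
move=> lt_e le_pow; rewrite ltnNge; apply/negP => ge_x.
have pow16_27 : 2 ^ (12 * e) <= 3 ^ (9 * e).
  have -> : 12 * e = 4 * (3 * e) by lia.
  have -> : 9 * e = 3 * (3 * e) by lia.
  rewrite !(expnM _ _ (3 * e)); elim: (3 * e) => // t IH.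
  by rewrite !expnS leq_mul.
have hk : k ^ n <= 2 ^ (k * n).
  by rewrite expnM; case: n {lt_e le_pow} => // n; rewrite leq_exp2r // ltnW // ltn_expl.
have : 3 ^ (9 * e) <= 2 ^ (10 * (k * n + k * k + e)).
  rewrite (leq_trans (leq_pexp2l _ ge_x)) // mulnC expnM [10 * _]mulnC expnM leq_exp2r //.
  by apply: leq_trans le_pow _; rewrite !expnD leq_mul // leq_mul.
move/(leq_trans pow16_27); rewrite leq_exp2l //; lia.
Qed.

Lemma preserved_arcs_ord_embed (V W : finType) (k : nat) (o : rel V) (g : V -> W) (D : rel W) :
  #|W| <= k -> asymmetric D ->
  exists (g' : {ffun V -> 'I_k}) (D' : {ffun 'I_k * 'I_k -> bool}),
    asymmetric (fun i j => D' (i, j)) /\ preserved_arcs o g D = preserved_arcs o g' (fun i j => D' (i, j)).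
Proof.
move=> le_Wk asymD.
pose emb x := widen_ord le_Wk (enum_rank x).
have emb_inj : injective emb by move=> x y /(congr1 val) /= /val_inj /enum_rank_inj.
pose D' := [ffun ij : 'I_k * 'I_k =>
  [exists x, exists y, [&& emb x == ij.1, emb y == ij.2 & D x y]]].
have D'E i j : reflect (exists x y, [/\ emb x = i, emb y = j & D x y]) (D' (i, j)).
  rewrite ffunE; apply: (iffP existsP) => [[x /existsP [y /and3P [/eqP ? /eqP ? ?]]] | [x [y [<- <- Dxy]]]].
    by exists x, y.
  by exists x; apply/existsP; exists y; rewrite !eqxx Dxy.
exists [ffun v => emb (g v)], D'; split.
  move=> i j /D'E [x [y [<- <- Dxy]]]; apply/D'E => -[y' [x' [/emb_inj-> /emb_inj-> Dyx]]].
  by move: (asymD _ _ Dxy); rewrite Dyx.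
apply: eq_bigr => u _; apply: eq_bigr => v _; rewrite !(ffunE (fun v => emb (g v))).
congr (o u v && _ : nat); apply/idP/D'E => [Dguv | [x [y [/emb_inj-> /emb_inj-> //]]]].
by exists (g u), (g v).
Qed.

Section RankPairs.
Variable T : finType.

Definition rank_lt (p : T * T) : bool := (enum_rank p.1 < enum_rank p.2)%N.

Lemma prod_pairs_split (F : T * T -> nat) :
  \prod_p F p = \prod_(p | rank_lt p) (F p * F (p.2, p.1)) * \prod_(p | p.1 == p.2) F p.
Proof.
rewrite (bigID rank_lt) /= big_split /= -mulnA; congr (_ * _).
rewrite (bigID (fun p : T * T => rank_lt (p.2, p.1))) /=; congr (_ * _).
  rewrite (reindex_inj (h := fun p : T * T => (p.2, p.1))) /=; last first.
    by move=> [a b] [c d] /= [-> ->].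
  by apply: eq_bigl => -[a c]; rewrite /rank_lt /=; case: ltngtP.
apply: eq_bigl => -[a c]; rewrite /rank_lt /=.
case: ltngtP => /= [lt_ac | lt_ca | /val_inj/enum_rank_inj -> //]; last by rewrite eqxx.
- by apply/esym/negbTE; apply: contraTneq lt_ac => ->; rewrite ltnn.
- by apply/esym/negbTE; apply: contraTneq lt_ca => ->; rewrite ltnn.
Qed.

End RankPairs.

Section RandomOrientation.
Variable G : graph.
Local Notation V := (gV G).
Local Notation E := (@gE G).

Definition bit_orientation (b : {ffun V * V -> bool}) : rel V :=
  fun u v => E u v && (if rank_lt (u, v) then b (u, v) else ~~ b (v, u)).

Lemma bit_orientationP b : is_orientation (bit_orientation b).
Proof.
split=> [u v /andP[] // | u v Euv]; rewrite /bit_orientation Euv [E v u]gE_sym Euv /rank_lt /=.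
have neq_uv : enum_rank u != enum_rank v.
  by apply: contraTneq Euv => /enum_rank_inj ->; rewrite gE_irrefl.
case: ltngtP neq_uv => [_ _ | _ _ | /val_inj ->]; last by rewrite eqxx.
- by rewrite addbN addbb.
- by rewrite addNb addbb.
Qed.

Definition num_edges : nat := \sum_(p : V * V) (rank_lt p && E p.1 p.2).

Lemma num_arcs_double (o : rel V) : is_orientation o ->
  num_arcs o * 2 = \sum_u \sum_v (E u v : nat).
Proof.
move=> [arc_edge edge_arc]; rewrite muln2 -addnn {2}/num_arcs exchange_big -big_split.
apply: eq_bigr => u _; rewrite -big_split; apply: eq_bigr => v _ /=.
case Euv: (E u v); first by move: (edge_arc _ _ Euv); case: (o u v); case: (o v u).
case ouv: (o u v); first by move: (arc_edge _ _ ouv); rewrite Euv.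
case ovu: (o v u) => //; by move: (arc_edge _ _ ovu); rewrite gE_sym Euv.
Qed.

Lemma num_edges_double : num_edges * 2 = \sum_u \sum_v (E u v : nat).
Proof.
rewrite -(num_arcs_double (bit_orientationP [ffun=> true])) /num_arcs pair_bigA /=.
congr (_ * 2); apply: eq_bigr => -[u v] _.
by rewrite /bit_orientation ffunE ffunE andbC; case: (rank_lt _); case: (E u v).
Qed.

Lemma num_arcs_orientation (o : rel V) : is_orientation o -> num_arcs o = num_edges.
Proof.
move=> o_or; apply/eqP.
by rewrite -(eqn_pmul2r (isT : 0 < 2)) num_arcs_double // num_edges_double.
Qed.

Lemma sum_exp3_preserved_arcs (W : finType) (g : V -> W) (D : rel W) : asymmetric D ->
  \sum_(b : {ffun V * V -> bool}) 3 ^ preserved_arcs (bit_orientation b) g D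
    <= 2 ^ #|{: V * V}| * 2 ^ num_edges.
Proof.
move=> asymD.
pose F (p : V * V) (bit : bool) := if rank_lt p then
  3 ^ (E p.1 p.2 && bit && D (g p.1) (g p.2)) *
  3 ^ (E p.2 p.1 && ~~ bit && D (g p.2) (g p.1)) else 1.
have preservedE b : 3 ^ preserved_arcs (bit_orientation b) g D = \prod_p F p (b p).
  rewrite /preserved_arcs pair_bigA /= expn_sum prod_pairs_split.
  rewrite [X in _ * X]big1 ?muln1; last first.
    by move=> [u v] /= /eqP ->; rewrite /bit_orientation gE_irrefl.
  rewrite big_mkcond; apply: eq_bigr => -[u v] /=.
  rewrite /F /bit_orientation /rank_lt /=.
  by case: ltngtP => // lt_uv; rewrite ltnNge (ltnW lt_uv).
rewrite (eq_bigr _ (fun b _ => preservedE b)) -(bigA_distr_bigA F) /=.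
rewrite /num_edges expn_sum -prod_nat_const -big_split /=.
(* Summing over the bit of a pair {u, v}: an edge contributes
   3^[D (g u) (g v)] + 3^[D (g v) (g u)] <= 4 as D is asymmetric,
   a non-edge contributes 2. *)
apply: leq_prod => -[u v] _; rewrite big_bool /F /= [E v u]gE_sym.
case: (rank_lt _); case: (E u v) => //=.
case Duv: (D (g u) (g v)); last by case: (D _ _).
by rewrite (negbTE (asymD _ _ Duv)).
Qed.

Lemma exists_bit_orientation_far (k : nat) : exists b, forall
    (g : {ffun V -> 'I_k}) (D : {ffun 'I_k * 'I_k -> bool}),
  asymmetric (fun i j => D (i, j)) ->
  3 ^ preserved_arcs (bit_orientation b) g (fun i j => D (i, j))
    <= k ^ #|V| * 2 ^ (k * k) * 2 ^ num_edges.
Proof.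
set M := _ * 2 ^ num_edges.
pose asym (D : {ffun 'I_k * 'I_k -> bool}) := `[< asymmetric (fun i j => D (i, j)) >].
pose S b := \sum_(g : {ffun V -> 'I_k}) \sum_(D | asym D)
    3 ^ preserved_arcs (bit_orientation b) g (fun i j => D (i, j)).
have [b Sb] : exists b, S b <= M.
  apply: exists_le_of_sum_lt; rewrite card_ffun card_bool.
  apply: (@leq_ltn_trans (2 ^ #|{: V * V}| * M)); last by rewrite ltn_pmul2l ?expn_gt0.
  rewrite /S exchange_big /= (@leq_trans (\sum_(g : {ffun V -> 'I_k})
      \sum_(D : {ffun 'I_k * 'I_k -> bool}) 2 ^ #|{: V * V}| * 2 ^ num_edges)) //.
    apply: leq_sum => g _; rewrite exchange_big /= [leqRHS](bigID asym) /=.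
    by apply: leq_trans (leq_addr _ _); apply: leq_sum => D /asboolP; apply: sum_exp3_preserved_arcs.
  rewrite !sum_nat_const !card_ffun !card_prod !card_ord card_bool /M.
  by rewrite [leqRHS]mulnCA !mulnA.
exists b => g D asymD; apply: leq_trans _ Sb.
rewrite /S (bigD1 g) //= (bigD1 D) /=; last exact/asboolP.
by rewrite -addnA leq_addr.
Qed.

Lemma sum_degrees : \sum_(v : V) #|[set u | E v u]| = num_edges * 2.
Proof.
rewrite num_edges_double; apply: eq_bigr => v _.
by rewrite -sum1dep_card big_mkcond /=; apply: eq_bigr => u _; case: (E v u).
Qed.

Lemma num_edges_le : num_edges * 2 <= #|V| * #|V|.
Proof.
rewrite num_edges_double (@leq_trans (\sum_(u : V) \sum_(v : V) 1)) //.
  by apply: leq_sum => u _; apply: leq_sum => v _; apply: leq_b1.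
by rewrite !sum_nat_const muln1 cardT.
Qed.

Lemma num_edges_gt_avg_degree (c : nat) :
  (c%:R < avg_degree G)%R -> c * #|V| < num_edges * 2.
Proof.
rewrite /avg_degree sum_degrees; have [->|n_gt0] := posnP #|V|.
  by rewrite invr0 mulr0 ltNge ler0n.
by rewrite ltr_pdivlMr ?ltr0n // -natrM ltr_nat.
Qed.

Lemma exists_orientation_far (k : nat) :
  ((20 * k + 20)%:R < avg_degree G)%R ->
  exists o : rel V,
    [/\ is_orientation o, 0 < num_arcs o & far_from_small_oriented k o].
Proof.
move=> /num_edges_gt_avg_degree lt_deg; have le_sq := num_edges_le.
have lt_kV : k < #|V| by nia.
have [b far_o] := exists_bit_orientation_far k.
exists (bit_orientation b); have arcsE := num_arcs_orientation (bit_orientationP b).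
split=> [||W g D le_Wk asymD]; rewrite ?arcsE; [exact: bit_orientationP | nia |].
have [g' [D' [asymD' ->]]] := preserved_arcs_ord_embed (bit_orientation b) g le_Wk asymD.
apply: exp_bound_lt (far_o g' D' asymD').
have := leq_mul (leqnn k) (ltnW lt_kV); nia.
Qed.

End RandomOrientation.

Local Open Scope ring_scope.

Section Opt.
Variables A B : estructure.

Lemma hom_value_ge0 (h : {ffun sdom A -> sdom B}) : 0 <= hom_value h.
Proof. by do 2!(apply: sumr_ge0 => ? _); apply: mulr_ge0; apply: srel_ge0. Qed.

Lemma le_opt (h : {ffun sdom A -> sdom B}) : hom_value h <= opt A B.
Proof. exact: le_bigmax. Qed.

Lemma opt_ge0 : 0 <= opt A B.
Proof.
apply: (big_ind (fun x => 0 <= x)) => // [x y x_ge0 y_ge0 | h _].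
  by rewrite le_max x_ge0.
exact: hom_value_ge0.
Qed.

Lemma opt_le (c : rat) :
  0 <= c -> (forall h : {ffun sdom A -> sdom B}, hom_value h <= c) -> opt A B <= c.
Proof. by move=> c_ge0 le_c; apply: bigmax_le. Qed.

Lemma opt_argmax : 0 < opt A B -> exists h : {ffun sdom A -> sdom B}, opt A B = hom_value h.
Proof.
case: (pickP (fun _ : {ffun sdom A -> sdom B} => true)) => [h0 _ _ | no_map].
  by eexists; rewrite /opt (bigmax_eq_arg _ h0) // => h _; apply: hom_value_ge0.
by rewrite /opt big_pred0 // ltxx.
Qed.

End Opt.

Definition pullback (A : estructure) (T : finType) (h : T -> sdom A) : estructure :=
  @EStructure T (fun x y => srel (h x) (h y)) (fun x y => srel_ge0 (h x) (h y)).
Arguments pullback A {T} h.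

Lemma hom_value_le_opt_pullback (A B : estructure) (h : {ffun sdom B -> sdom A}) :
  hom_value h <= opt B (pullback A h).
Proof.
suff -> : hom_value h = @hom_value B (pullback A h) [ffun x => x] by apply: le_opt.
by apply: eq_bigr => x _; apply: eq_bigr => y _; rewrite !ffunE.
Qed.

Lemma orientation_asymmetric (G : graph) (o : rel (gV G)) :
  is_orientation o -> asymmetric o.
Proof.
move=> [arc_edge edge_arc] u v ouv.
by move: (edge_arc _ _ (arc_edge _ _ ouv)); rewrite ouv.
Qed.

Section OrientStruct.
Variables (G : graph) (o : rel (gV G)).
Local Notation A := (orient_struct o).

Lemma hom_value_orient (C : estructure) (r : rel (sdom C)) :
  (forall x y, srel x y = if r x y then 1 else 0) ->
  forall g : {ffun gV G -> sdom C}, hom_value (A := A) g = (preserved_arcs o g r)%:R.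
Proof.
move=> srelE g; rewrite /hom_value /preserved_arcs natr_sum; apply: eq_bigr => u _.
rewrite natr_sum; apply: eq_bigr => v _; rewrite srelE /=.
by case: (o u v); case: (r _ _); rewrite ?mulr0 ?mulr1.
Qed.

Lemma num_arcs_le_opt : (num_arcs o)%:R <= opt A A.
Proof.
apply: le_trans (le_opt [ffun x => x]); rewrite (@hom_value_orient A o) // ler_nat.
by rewrite leq_sum // => u _; rewrite leq_sum // => v _; rewrite !ffunE andbb.
Qed.

Lemma opt_orient_pullback_le (k : nat) :
  is_orientation o -> far_from_small_oriented k o -> forall (T : finType) (h : T -> gV G), (#|T| <= k)%N ->
  opt A (pullback A h) <= (num_arcs o)%:R * (9 / 10).
Proof.
move=> o_or far_o T h le_Tk; apply: opt_le => [|g]; first exact: mulr_ge0.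
rewrite (@hom_value_orient (pullback A h) (fun x y => o (h x) (h y))) //.
have asym_oh : asymmetric (fun x y => o (h x) (h y)).
  by move=> x y; apply: orientation_asymmetric.
move/ltnW: (far_o _ g _ le_Tk asym_oh); rewrite -(ler_nat rat) !natrM => ?; lra.
Qed.

End OrientStruct.

Lemma ln_distC (R : realType) (a b : rat) : ln_dist R a b = ln_dist R b a.
Proof. by rewrite /ln_dist andbC orbC distrC. Qed.

Lemma ln_dist_le_lower (R : realType) (a b q : rat) : 0 < a -> 0 <= b ->
  (ln_dist R a b <= (ratr q)%:E)%E -> a * (1 - q) <= b.
Proof.
move=> a_gt0 b_ge0; rewrite /ln_dist (gt_eqF a_gt0) /=.
have [->|b_neq0] := eqVneq b 0; first by rewrite leye_eq.
rewrite lee_fin ler_norml => /andP[_ le_ln].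
have ra_gt0 : (0 : R) < ratr a by rewrite ltr0q.
have rb_gt0 : (0 : R) < ratr b by rewrite ltr0q lt_def b_neq0.
have le_exp : ratr a * expR (- ratr q) <= ratr b :> R.
  rewrite -[ratr a]lnK ?posrE // -expRD -[ratr b]lnK ?posrE // ler_expR; lra.
rewrite -(ler_rat R) rmorphM rmorphB rmorph1 /=; apply: le_trans le_exp.
by rewrite ler_pM2l // expR_ge1Dx.
Qed.

Lemma ln_dist_le_d_opt (R : realType) (A B C : estructure) :
  (ln_dist R (opt A C) (opt B C) <= d_opt R A B)%E.
Proof. by apply: ereal_sup_ubound; exists C. Qed.

Lemma d_optC (R : realType) (A B : estructure) : d_opt R A B = d_opt R B A.
Proof.
by rewrite /d_opt; congr ereal_sup; apply/seteqP; split=> r [C ->]; exists C; rewrite ln_distC.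
Qed.

Lemma opt_ge_d_opt (R : realType) (A B C : estructure) (q : rat) :
  (d_opt R A B <= (ratr q)%:E)%E -> 0 < opt A C -> opt A C * (1 - q) <= opt B C.
Proof.
move=> le_d opt_gt0; apply: (ln_dist_le_lower (R := R)) => //; first exact: opt_ge0.
exact: le_trans (ln_dist_le_d_opt _ _ _ _) le_d.
Qed.

Theorem lemma43 (R : realType) (cls : graph -> Prop) :
  unbounded_avg_degree cls -> ~ size_pliable R (orientations_of cls).
Proof.
move=> unbounded pliable.
have eps_gt0 : (0 : R) < ratr 100%:R^-1 by rewrite ltr0q invr_gt0 ltr0n.
have [k approx] := pliable _ eps_gt0.
have [G [clsG avg_gt]] := unbounded ((20 * k + 20)%N)%:R.
have [o [o_or arcs_gt0 far_o]] := exists_orientation_far avg_gt.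
pose A := orient_struct o; have m_gt0 : 0 < (num_arcs o)%:R :> rat by rewrite ltr0n.
have [|B [le_Bk dAB]] := approx A; first by exists G; split=> //; exists o.
have oAA := num_arcs_le_opt o.
have oBA := opt_ge_d_opt dAB (lt_le_trans m_gt0 oAA).
have [|h opt_h] := @opt_argmax B A; first lra.
have oBC := hom_value_le_opt_pullback h.
rewrite d_optC in dAB.
have oAC := opt_ge_d_opt (C := pullback A h) dAB ltac:(lra).
have := opt_orient_pullback_le o_or far_o h le_Bk.
lra.
Qed.
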